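(* Let $(T_1,T_2,T_3)$ be an associative Clifford extension over $(V,S^0,S^1)$ with $T_1\neq0$. Then either $\dim V=1$, or $\dim V\le\dim S^0\le4$.
   Context: All spaces are finite-dimensional real Euclidean. For a Euclidean space $X$, $\mathrm{Cl}(X)$ is the Clifford algebra with $x\cdot x=-|x|^2$; a ''$\mathrm{Cl}(X)$-module $Y\oplus Z$'' is a $\mathbb Z/2$-graded module with $X\cdot Y\subset Z$, $X\cdot Z\subset Y$, $Y\perp Z$, each $x\in X$ acting skew-symmetrically; the action is written $xy$. Let $V\neq0$ be Euclidean and $S^0\oplus S^1$ a nonzero $\mathrm{Cl}(V)$-module. A Clifford extension over $(V,S^0,S^1)$ is a triple of Euclidean spaces $T_1,T_2,T_3$ of equal dimension together with a $\mathrm{Cl}(V)$-module structure on $T_2\oplus T_3$, a $\mathrm{Cl}(S^0)$-module structure on $T_1\oplus T_2$, and a $\mathrm{Cl}(S^1)$-module structure on $T_1\oplus T_3$. It is associative if $(vs^0)t_1=v(s^0t_1)$ for all $v\in V,s^0\in S^0,t_1\in T_1$. *)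

(* Finite-dimensional real Euclidean spaces are modelled as
   row vectors 'rV[R]_n (R : realType) with the standard inner product. *)
From HB Require Import structures.
From mathcomp Require Import all_boot all_order all_algebra.
From mathcomp Require Import reals.
Set Implicit Arguments. Unset Strict Implicit. Unset Printing Implicit Defensive.
Import Order.TTheory GRing.Theory Num.Theory.
Local Open Scope ring_scope.

Definition dotv (R : realType) (n : nat) (u v : 'rV[R]_n) : R := (u *m v^T) 0 0.

Definition bilinear_map (R : realType) (a b c : nat)
  (f : 'rV[R]_a -> 'rV[R]_b -> 'rV[R]_c) : Prop :=
  (forall (k : R) x x' y, f (k *: x + x') y = k *: f x y + f x' y) /\
  (forall (k : R) x y y', f x (k *: y + y') = k *: f x y + f x y').

(* A Z/2-graded Cl(X)-module structure on Y (+) Z, with X = R^a, Y = R^b,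
   Z = R^c (Y and Z orthogonal in the direct sum).  mY x y = x y in Z,
   mZ x z = x z in Y.  Conditions: the action is bilinear, x.x = -|x|^2
   (i.e. x(xw) = -|x|^2 w for w in Y (+) Z), and each x acts
   skew-symmetrically on Y (+) Z, which by the grading and Y _|_ Z amounts
   to <x y, z> = - <y, x z>. *)
Definition cl_module (R : realType) (a b c : nat)
  (mY : 'rV[R]_a -> 'rV[R]_b -> 'rV[R]_c)
  (mZ : 'rV[R]_a -> 'rV[R]_c -> 'rV[R]_b) : Prop :=
  [/\ bilinear_map mY, bilinear_map mZ,
      (forall x y, mZ x (mY x y) = - dotv x x *: y),
      (forall x z, mY x (mZ x z) = - dotv x x *: z) &
      (forall x y z, dotv (mY x y) z = - dotv y (mZ x z))].

From HB Require Import structures.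
From mathcomp Require Import all_boot all_order all_algebra.
From mathcomp Require Import reals.
From mathcomp Require Import lra.
Import Order.TTheory GRing.Theory Num.Theory.
Set Implicit Arguments. Unset Strict Implicit. Unset Printing Implicit Defensive.
Local Open Scope ring_scope.

(* A unit vector [x] of [S^1] gives an isometric embedding
   [v |-> v x] of [V] into [S^0], so [n <= p]; here [S^1 <> 0], since otherwise
   [S^0 <> 0] and dually [V] would embed into [S^1].  For orthonormal [v0, w] in [V], [J = v0 w] is an
   isometry of [S^0] with [J s] orthogonal to [s], and associativity says that
   [v0 w] acts on [T_2] by [s t |-> (J s) t].  Playing this against the
   anticommutation relations shows that [b (J b) = - a (J a)] on [T_1] whenever
   [a, b] are unit vectors with [b] orthogonal to [a] and [J a].  If [p >= 5]
   there are three unit vectors pairwise in this relation, so [a (J a)] equals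
   its own opposite and vanishes, which is impossible since Clifford
   multiplication by nonzero vectors is injective and [T_1 <> 0]. *)

Section InnerProduct.
Variable R : realType.

Lemma dotvE n (u v : 'rV[R]_n) : dotv u v = \sum_j u 0 j * v 0 j.
Proof. by rewrite /dotv !mxE; apply: eq_bigr => j _; rewrite mxE. Qed.

Lemma dotvC n (u v : 'rV[R]_n) : dotv u v = dotv v u.
Proof. by rewrite !dotvE; apply: eq_bigr => j _; rewrite mulrC. Qed.

Lemma dotvDl n (x y z : 'rV[R]_n) : dotv (x + y) z = dotv x z + dotv y z.
Proof. by rewrite /dotv mulmxDl mxE. Qed.

Lemma dotvDr n (x y z : 'rV[R]_n) : dotv z (x + y) = dotv z x + dotv z y.
Proof. by rewrite dotvC dotvDl !(dotvC z). Qed.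

Lemma dotvZl n k (x z : 'rV[R]_n) : dotv (k *: x) z = k * dotv x z.
Proof. by rewrite /dotv -scalemxAl mxE. Qed.

Lemma dotvZr n k (x z : 'rV[R]_n) : dotv z (k *: x) = k * dotv z x.
Proof. by rewrite dotvC dotvZl dotvC. Qed.

Lemma dotv_ge0 n (x : 'rV[R]_n) : 0 <= dotv x x.
Proof. by rewrite dotvE; apply: sumr_ge0 => j _; rewrite -expr2 sqr_ge0. Qed.

Lemma dotv_eq0 n (x : 'rV[R]_n) : (dotv x x == 0) = (x == 0).
Proof.
apply/eqP/eqP => [|->]; last by rewrite dotvE big1 // => j _; rewrite mxE mul0r.
rewrite dotvE => /psumr_eq0P x0; apply/rowP => j; rewrite mxE.
by apply/eqP; rewrite -sqrf_eq0 expr2 x0 // => i _; rewrite -expr2 sqr_ge0.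
Qed.

Lemma dotv_row m n p (A : 'M[R]_(m, n)) (B : 'M[R]_(p, n)) i j :
  (A *m B^T) i j = dotv (row i A) (row j B).
Proof. by rewrite /dotv !mxE; apply: eq_bigr => k _; rewrite !mxE. Qed.

Lemma dotv_delta n (i j : 'I_n) :
  dotv (delta_mx 0 i) (delta_mx 0 j) = (i == j)%:R :> R.
Proof. by rewrite /dotv trmx_delta mul_delta_mx_cond; case: (i == j); rewrite mxE. Qed.

Lemma exists_unit_orth n (s : seq 'rV[R]_n) : (size s < n)%N ->
  exists x, dotv x x = 1 /\ all (fun y => dotv y x == 0) s.
Proof.
move=> lt_s_n; pose B := \matrix_(i < size s) nth 0 s i.
have : kermx B^T != 0.
  rewrite -mxrank_eq0 mxrank_ker mxrank_tr subn_eq0 -ltnNge.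
  exact: leq_ltn_trans (rank_leq_row B) lt_s_n.
case/rowV0Pn => y /sub_kermxP yB y_neq0.
have y_gt0 : 0 < dotv y y by rewrite lt_def dotv_eq0 y_neq0 dotv_ge0.
exists ((Num.sqrt (dotv y y))^-1 *: y); split.
  by rewrite dotvZl dotvZr mulrA -expr2 exprVn sqr_sqrtr ?ltW // mulVf ?gt_eqF.
apply/(all_nthP 0) => i lt_i; rewrite dotvZr dotvC mulf_eq0; apply/orP; right.
move/matrixP/(_ 0 (Ordinal lt_i)): yB; rewrite dotv_row mxE => <-.
by apply/eqP; congr dotv; apply/rowP => j; rewrite !mxE.
Qed.

Lemma opp_rV_eq n (v : 'rV[R]_n) : - v = v -> v = 0.
Proof.
move/eqP; rewrite eq_sym -subr_eq0 opprK -mulr2n -scaler_nat scaler_eq0.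
by rewrite pnatr_eq0 /= => /eqP.
Qed.

End InnerProduct.

Section Bilinear.
Variables (R : realType) (a b c : nat) (f : 'rV[R]_a -> 'rV[R]_b -> 'rV[R]_c).
Hypothesis f_bilin : bilinear_map f.

Lemma bilinDl x x' y : f (x + x') y = f x y + f x' y.
Proof. by have := f_bilin.1 1 x x' y; rewrite !scale1r. Qed.

Lemma bilinDr x y y' : f x (y + y') = f x y + f x y'.
Proof. by have := f_bilin.2 1 x y y'; rewrite !scale1r. Qed.

Lemma bilin0r x : f x 0 = 0.
Proof. by apply/(addrI (f x 0)); rewrite -bilinDr !addr0. Qed.

Lemma bilinNr x y : f x (- y) = - f x y.
Proof. by apply/eqP; rewrite -addr_eq0 -bilinDr addNr bilin0r. Qed.

Lemma bilinNl x y : f (- x) y = - f x y.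
Proof.
have f0y : f 0 y = 0 by apply/(addrI (f 0 y)); rewrite -bilinDl !addr0.
by apply/eqP; rewrite -addr_eq0 -bilinDl addNr f0y.
Qed.

End Bilinear.

Section CliffordModule.
Variables (R : realType) (a b c : nat).
Variables (mY : 'rV[R]_a -> 'rV[R]_b -> 'rV[R]_c)
          (mZ : 'rV[R]_a -> 'rV[R]_c -> 'rV[R]_b).
Hypothesis cl : cl_module mY mZ.

Lemma cl_module_sym : cl_module mZ mY.
Proof.
case: cl => HY HZ sqrY sqrZ skew; split => // x z y.
by rewrite (dotvC z) skew opprK dotvC.
Qed.

Lemma clY_bilin : bilinear_map mY.
Proof. by case: cl. Qed.

Lemma clY_sqr x y : mZ x (mY x y) = - dotv x x *: y.
Proof. by case: cl. Qed.

Lemma clY_skew x y z : dotv (mY x y) z = - dotv y (mZ x z).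
Proof. by case: cl. Qed.

(* Polarization of [x x = -|x|^2]. *)
Lemma clY_anticomm x x' y :
  mZ x (mY x' y) + mZ x' (mY x y) = - (2 * dotv x x') *: y.
Proof.
case: cl => HY HZ _ _ _; have := clY_sqr (x + x') y.
rewrite (bilinDl HY) (bilinDl HZ) !(bilinDr HZ) !clY_sqr.
rewrite dotvDl !dotvDr (dotvC x' x) => E; apply/rowP => j.
by move/rowP/(_ j): E; rewrite !mxE => E; lra.
Qed.

Lemma clY_anticomm_orth x x' y : dotv x x' = 0 ->
  mZ x (mY x' y) = - mZ x' (mY x y).
Proof.
move=> xx'; apply/eqP; rewrite -addr_eq0 clY_anticomm xx'.
by rewrite mulr0 oppr0 scale0r.
Qed.

Lemma clY_dot x x' y : dotv (mY x y) (mY x' y) = dotv x x' * dotv y y.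
Proof.
have := congr1 (dotv y) (clY_anticomm x x' y).
rewrite dotvDr dotvZr -[dotv y (mZ x _)]opprK -[dotv y (mZ x' _)]opprK.
by rewrite -!clY_skew (dotvC (mY x' y)) => E; lra.
Qed.

Lemma clY_eq0 x y : (mY x y == 0) = (x == 0) || (y == 0).
Proof. by rewrite -!dotv_eq0 clY_dot mulf_eq0. Qed.

Lemma cl_module_dim : (0 < b)%N -> (a <= c)%N.
Proof.
move=> b_gt0; pose y : 'rV[R]_b := delta_mx 0 (Ordinal b_gt0).
pose A := \matrix_(i < a) mY (delta_mx 0 i) y.
have AAt : A *m A^T = 1%:M.
  apply/matrixP => i j; rewrite dotv_row !rowK clY_dot !dotv_delta eqxx mulr1.
  by rewrite !mxE.
by rewrite -(mxrank1 R a) -AAt (leq_trans (mxrankM_maxl _ _) (rank_leq_col A)).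
Qed.

End CliffordModule.

Section AssociativeExtension.
Variables (R : realType) (n p q m : nat).
Variables (vS0 : 'rV[R]_n -> 'rV[R]_p -> 'rV[R]_q)
          (vS1 : 'rV[R]_n -> 'rV[R]_q -> 'rV[R]_p)
          (vT2 : 'rV[R]_n -> 'rV[R]_m -> 'rV[R]_m)
          (vT3 : 'rV[R]_n -> 'rV[R]_m -> 'rV[R]_m)
          (sT1 : 'rV[R]_p -> 'rV[R]_m -> 'rV[R]_m)
          (sT2 : 'rV[R]_p -> 'rV[R]_m -> 'rV[R]_m)
          (rT1 : 'rV[R]_q -> 'rV[R]_m -> 'rV[R]_m)
          (rT3 : 'rV[R]_q -> 'rV[R]_m -> 'rV[R]_m).
Hypotheses (HS : cl_module vS0 vS1) (HT : cl_module vT2 vT3)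
           (HsT : cl_module sT1 sT2) (HrT : cl_module rT1 rT3).
Hypothesis assoc : forall v s t, rT1 (vS0 v s) t = vT2 v (sT1 s t).
Variables v0 w : 'rV[R]_n.
Hypotheses (v0_unit : dotv v0 v0 = 1) (w_unit : dotv w w = 1)
           (w_v0_orth : dotv w v0 = 0).

(* [J] is the action of the Clifford product [v0 w] on [S^0]. *)
Let J s := vS1 v0 (vS0 w s).

Lemma J_orth s : dotv (J s) s = 0.
Proof.
by rewrite /J (clY_skew (cl_module_sym HS)) (clY_dot HS) w_v0_orth mul0r oppr0.
Qed.

Lemma J_norm s : dotv (J s) (J s) = dotv s s.
Proof.
by rewrite /J (clY_dot (cl_module_sym HS)) (clY_dot HS) v0_unit w_unit !mul1r.
Qed.

Lemma assoc_J s t : vT3 v0 (vT2 w (sT1 s t)) = sT1 (J s) t.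
Proof.
have ws : vS0 w s = - vS0 v0 (J s).
  by rewrite /J (clY_sqr (cl_module_sym HS)) v0_unit scaleN1r opprK.
rewrite -assoc ws (bilinNl (clY_bilin HrT)) assoc.
by rewrite (bilinNr (clY_bilin (cl_module_sym HT))) (clY_sqr HT) v0_unit scaleN1r opprK.
Qed.

Lemma assoc_J_unit a u : dotv a a = 1 ->
  vT3 v0 (vT2 w u) = - sT1 (J a) (sT2 a u).
Proof.
move=> a_unit; rewrite -assoc_J (clY_sqr (cl_module_sym HsT)) a_unit scaleN1r.
by rewrite (bilinNr (clY_bilin HT)) (bilinNr (clY_bilin (cl_module_sym HT))) opprK.
Qed.

Lemma J_sqr_flip a b t :
    dotv a a = 1 -> dotv b b = 1 -> dotv a b = 0 -> dotv (J a) b = 0 ->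
  sT2 b (sT1 (J b) t) = - sT2 a (sT1 (J a) t).
Proof.
move=> a_unit b_unit ab_orth Ja_b_orth.
have sT2N := bilinNr (clY_bilin (cl_module_sym HsT)).
have sT1N := bilinNr (clY_bilin HsT).
rewrite -assoc_J (assoc_J_unit _ a_unit) (clY_anticomm_orth HsT _ ab_orth).
rewrite sT1N (clY_anticomm_orth (cl_module_sym HsT) _ Ja_b_orth) !opprK.
rewrite sT2N (clY_sqr HsT) b_unit scaleN1r opprK.
by rewrite (clY_anticomm_orth HsT _ (J_orth a)).
Qed.

Lemma dim_le4 : (0 < m)%N -> (p <= 4)%N.
Proof.
move=> m_gt0; rewrite leqNgt; apply/negP => p_gt4.
have p_gt2 : (2 < p)%N by apply: leq_trans p_gt4.
have p_gt0 : (0 < p)%N by apply: leq_trans p_gt4.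
pose a : 'rV[R]_p := delta_mx 0 (Ordinal p_gt0).
pose t : 'rV[R]_m := delta_mx 0 (Ordinal m_gt0).
have a_unit : dotv a a = 1 by rewrite dotv_delta eqxx.
have [b [b_unit /and3P[/eqP ab /eqP Jab _]]] :=
  exists_unit_orth (s := [:: a; J a]) p_gt2.
have [c [c_unit /and5P[/eqP ac /eqP Jac /eqP bc /eqP Jbc _]]] :=
  exists_unit_orth (s := [:: a; J a; b; J b]) p_gt4.
have := J_sqr_flip t b_unit c_unit bc Jbc.
rewrite (J_sqr_flip t a_unit c_unit ac Jac) (J_sqr_flip t a_unit b_unit ab Jab).
rewrite opprK => /opp_rV_eq/eqP.
rewrite (clY_eq0 (cl_module_sym HsT)) (clY_eq0 HsT) -!dotv_eq0 J_norm a_unit.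
by rewrite dotv_delta eqxx oner_eq0.
Qed.

End AssociativeExtension.

Theorem mainTheorem9 (R : realType) (n p q m : nat)
  (vS0 : 'rV[R]_n -> 'rV[R]_p -> 'rV[R]_q)
  (vS1 : 'rV[R]_n -> 'rV[R]_q -> 'rV[R]_p)
  (vT2 : 'rV[R]_n -> 'rV[R]_m -> 'rV[R]_m)
  (vT3 : 'rV[R]_n -> 'rV[R]_m -> 'rV[R]_m)
  (sT1 : 'rV[R]_p -> 'rV[R]_m -> 'rV[R]_m)
  (sT2 : 'rV[R]_p -> 'rV[R]_m -> 'rV[R]_m)
  (rT1 : 'rV[R]_q -> 'rV[R]_m -> 'rV[R]_m)
  (rT3 : 'rV[R]_q -> 'rV[R]_m -> 'rV[R]_m) :
  (0 < n)%N ->                         (* V <> 0 *)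
  (0 < p + q)%N ->                     (* S^0 (+) S^1 <> 0 *)
  cl_module vS0 vS1 ->                 (* Cl(V)-module S^0 (+) S^1 *)
  cl_module vT2 vT3 ->                 (* Cl(V)-module T_2 (+) T_3 *)
  cl_module sT1 sT2 ->                 (* Cl(S^0)-module T_1 (+) T_2 *)
  cl_module rT1 rT3 ->                 (* Cl(S^1)-module T_1 (+) T_3 *)
  (forall v s0 t1, rT1 (vS0 v s0) t1 = vT2 v (sT1 s0 t1)) -> (* associative *)
  (0 < m)%N ->                         (* T_1 <> 0 *)
  n = 1%N \/ (n <= p <= 4)%N.
Proof.
move=> n_gt0 pq_gt0 HS HT HsT HrT assoc m_gt0.
have [->|n_neq1] := eqVneq n 1%N; [by left | right].
have n_gt1 : (1 < n)%N by rewrite ltn_neqAle eq_sym n_neq1 n_gt0.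
have q_gt0 : (0 < q)%N.
  have [p0 | p_gt0] := posnP p; first by rewrite p0 in pq_gt0.
  exact: leq_trans n_gt0 (cl_module_dim HS p_gt0).
rewrite (cl_module_dim (cl_module_sym HS) q_gt0) /=.
pose v0 : 'rV[R]_n := delta_mx 0 (Ordinal n_gt0).
pose w : 'rV[R]_n := delta_mx 0 (Ordinal n_gt1).
apply: (dim_le4 HS HT HsT HrT assoc (v0 := v0) (w := w)) m_gt0.
- by rewrite /v0 dotv_delta eqxx.
- by rewrite /w dotv_delta eqxx.
- by rewrite /v0 /w dotv_delta (_ : _ == _ = false) // mulr0n.
Qed.
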